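(* Let $n\geq 2$ and let $R$ be the unital associative ring $\langle x,y \mid x^n=0,\ y^n=0,\ xy+y^{n-1}x^{n-1}=1\rangle$. For any integers $k,l,m\geq 0$ with $m\geq l$, the following hold in $R$: $$x^ky^lx^m = \begin{cases} y^{l-k}x^m & \text{if } l\geq k,\\ x^{k+m-l} & \text{if } l\leq k,\end{cases}\qquad y^mx^ly^k = \begin{cases} y^{m}x^{l-k} & \text{if } l\geq k,\\ y^{k+m-l} & \text{if } l\leq k.\end{cases}$$
   Context: $R$ denotes the quotient of the free unital associative ring $\mathbb{Z}\langle x,y\rangle$ by the two-sided ideal generated by $x^n$, $y^n$ and $xy+y^{n-1}x^{n-1}-1$; $x^0=y^0=1$. *)

From mathcomp Require Import all_boot all_order all_algebra.
Set Implicit Arguments. Unset Strict Implicit. Unset Printing Implicit Defensive.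
Import GRing.Theory.
Local Open Scope ring_scope.

Definition R_relations (T : pzRingType) (n : nat) (x y : T) : Prop :=
  [/\ x ^+ n = 0, y ^+ n = 0 & x * y + y ^+ n.-1 * x ^+ n.-1 = 1].

From mathcomp Require Import all_boot all_order all_algebra.
Import GRing.Theory.
Local Open Scope ring_scope.

(* Write n = N.+1 (only n >= 1 is used) and e = y^N x^N, so that x y = 1 - e with e x = 0 and y e = 0;
   hence x y x = x and x (1 - y x) = 0.  The only obstruction to cancelling
   x^k y^k in x^k y^l x^m is a leftover e y^l' x^m', and x^N y^l x^(l+1) = 0
   kills it: this follows by induction on l from x^a y^b (1 - y x) = 0 for b < a.
   The statements for y^m x^l y^k are the same identities read in the converse
   ring, where (y, x) again satisfy the relations. *)

Section Relations.

Context {T : pzRingType} {N : nat} {x y : T}.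
Hypothesis rel_xy : R_relations N.+1 x y.

Let exprx_n : x ^+ N.+1 = 0. Proof. by case: rel_xy. Qed.
Let expry_n : y ^+ N.+1 = 0. Proof. by case: rel_xy. Qed.

Lemma mulxy_rel : x * y = 1 - y ^+ N * x ^+ N.
Proof. by case: rel_xy => _ _ /= <-; rewrite addrK. Qed.

Lemma mulx_1subyx : x * (1 - y * x) = 0.
Proof.
have xyx : x * y * x = x.
  by rewrite mulxy_rel mulrBl mul1r -mulrA -exprSr exprx_n mulr0 subr0.
by rewrite mulrBr mulr1 mulrA xyx subrr.
Qed.

Lemma exprxy_1subyx a b : (b < a)%N -> x ^+ a * y ^+ b * (1 - y * x) = 0.
Proof.
elim: b a => [|b IHb] [|a] //= lt_ba.
  by rewrite expr0 mulr1 exprSr -mulrA mulx_1subyx mulr0.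
have [lt_bN | le_Nb] := ltnP b N; last first.
  by rewrite -(subnK le_Nb) -addnS exprD expry_n !mulr0 mul0r.
have -> : x ^+ a.+1 * y ^+ b.+1 = x ^+ a * (x * y) * y ^+ b.
  by rewrite exprSr exprS !mulrA.
rewrite mulxy_rel (mulrBr (x ^+ a)) mulr1 !mulrBl IHb // sub0r.
by rewrite -!mulrA (mulrA (x ^+ N)) IHb // !mulr0 oppr0.
Qed.

Lemma exprxN_yx l : x ^+ N * y ^+ l * x ^+ l.+1 = 0.
Proof.
elim: l => [|l IHl]; first by rewrite expr0 mulr1 -exprSr exprx_n.
have [lt_lN | le_Nl] := ltnP l N; last first.
  by rewrite -(subnK le_Nl) -addnS exprD expry_n !(mulr0, mul0r).
have yx : y * x = 1 - (1 - y * x) by rewrite subKr.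
have -> : x ^+ N * y ^+ l.+1 * x ^+ l.+2 = x ^+ N * y ^+ l * (y * x) * x ^+ l.+1.
  by rewrite exprSr (exprS x) !mulrA.
by rewrite yx mulrBr mulr1 mulrBl IHl exprxy_1subyx // mul0r subr0.
Qed.

Lemma mulxNy_yx l m : (l < m)%N -> y ^+ N * x ^+ N * y ^+ l * x ^+ m = 0.
Proof.
move=> lt_lm; rewrite -(subnKC lt_lm) exprD !mulrA.
by rewrite -(mulrA (y ^+ N)) -(mulrA (y ^+ N)) exprxN_yx mulr0 mul0r.
Qed.

Lemma exprxyx_le k l m :
  (k <= l <= m)%N -> x ^+ k * y ^+ l * x ^+ m = y ^+ (l - k) * x ^+ m.
Proof.
elim: k l => [|k IHk] l; first by rewrite mul1r subn0.
case: l => // l /andP[le_kl le_lm].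
have -> : x ^+ k.+1 * y ^+ l.+1 * x ^+ m = x ^+ k * ((x * y) * y ^+ l * x ^+ m).
  by rewrite exprSr exprS !mulrA.
rewrite mulxy_rel mulrBl mul1r mulrBl mulxNy_yx // subr0 !mulrA subSS.
by rewrite IHk // -ltnS le_kl ltnW.
Qed.

Lemma exprxyx_ge k l m :
  (l <= k)%N -> (l <= m)%N -> x ^+ k * y ^+ l * x ^+ m = x ^+ (k + m - l).
Proof.
move=> le_lk le_lm; rewrite -(subnK le_lk) exprD -!mulrA (mulrA (x ^+ l)).
by rewrite exprxyx_le ?leqnn // subnn mul1r -exprD addnAC addnK.
Qed.

End Relations.

Lemma R_relations_rev {T : pzRingType} {n} {x y : T} :
  R_relations n x y -> R_relations n (y : T^c) (x : T^c).
Proof. by case=> *; split; rewrite ?revrX. Qed.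

Theorem lemma1 (T : pzRingType) (n : nat) (x y : T) :
  (2 <= n)%N -> R_relations n x y ->
  forall k l m : nat, (l <= m)%N ->
    [/\ ((k <= l)%N -> x ^+ k * y ^+ l * x ^+ m = y ^+ (l - k)%N * x ^+ m),
        ((l <= k)%N -> x ^+ k * y ^+ l * x ^+ m = x ^+ (k + m - l)%N),
        ((k <= l)%N -> y ^+ m * x ^+ l * y ^+ k = y ^+ m * x ^+ (l - k)%N) &
        ((l <= k)%N -> y ^+ m * x ^+ l * y ^+ k = y ^+ (k + m - l)%N)].
Proof.
case: n => // N _ rel_xy k l m le_lm.
have rel_yx := R_relations_rev rel_xy.
split=> [le_kl|le_lk|le_kl|le_lk].
- by rewrite (exprxyx_le rel_xy) // le_kl le_lm.
- exact: (exprxyx_ge rel_xy _ _ _ le_lk le_lm).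
- have := exprxyx_le rel_yx k l m; rewrite le_kl le_lm !revrX => /(_ isT) eq_yx.
  by rewrite -mulrA; exact eq_yx.
- have := exprxyx_ge rel_yx k l m le_lk le_lm; rewrite !revrX => eq_yx.
  by rewrite -mulrA; exact eq_yx.
Qed.
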